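(* Let $K\ge2$, $0<q<p$ with $p+(K-1)q=1$. Each of the four estimators $\mathrm{Inv}$, $\mathrm{InvP}$, $\mathrm{InvN}$, $\mathrm{MLE}^*$ is consistent: for every $\theta\in\Delta$, if $\hat\theta$ denotes any of them, $\hat\theta(\phi^{(N)})\to\theta$ in probability as $N\to\infty$. Moreover, for $\hat\theta\in\{\mathrm{Inv},\mathrm{InvP}\}$, the mean squared error satisfies $\mathbb{E}\|\hat\theta(\phi^{(N)})-\theta\|_2^2=O(K/N)$, i.e. there is a constant $C$ depending only on $p,q$ such that $\mathbb{E}\|\hat\theta(\phi^{(N)})-\theta\|_2^2\le CK/N$ for all $\theta\in\Delta$ and $N\ge1$.
   Context: $\Delta=\{\theta\in\mathbb{R}^K:\theta_i\ge0,\sum_i\theta_i=1\}$. Randomized response: on input $x\in\{1,\dots,K\}$, outputs $y$ with probability $p$ if $y=x$, $q$ otherwise. For $\theta\in\Delta$, let $X_1,X_2,\dots$ be i.i.d. with distribution $\theta$, $Y_u$ the output of randomized response on $X_u$ (independent randomness), and $\phi^{(N)}$ the empirical histogram of $Y_1,\dots,Y_N$: $\phi^{(N)}_y=\frac1N|\{u\le N:Y_u=y\}|$. Estimators: $\mathrm{Inv}(\phi)_i=\frac{\phi_i-q}{p-q}$; $\mathrm{InvN}(\phi)_i=\frac{\max(0,\mathrm{Inv}(\phi)_i)}{\sum_j\max(0,\mathrm{Inv}(\phi)_j)}$; $\mathrm{InvP}(\phi)=\arg\min_{\theta'\in\Delta}\|\theta'-\mathrm{Inv}(\phi)\|_2$.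 $\mathrm{MLE}^*(\phi)$: for real $\tau$ let $m(\tau)=|\{i:\phi_i<\tau\}|$, $c_\tau=\frac{1-m(\tau)q}{\sum_{i:\phi_i\ge\tau}\phi_i}$; let $\tau^*$ be the smallest $\tau\in\{\phi_1,\dots,\phi_K\}$ with $c_\tau\phi_i\ge q$ for all $i$ with $\phi_i\ge\tau$; $\mathrm{MLE}^*(\phi)_i=0$ if $\phi_i<\tau^*$ and $\frac{c_{\tau^*}\phi_i-q}{p-q}$ otherwise. *)

From HB Require Import structures.
From mathcomp Require Import all_boot all_order all_algebra.
From mathcomp Require Import boolp classical_sets reals.
Set Implicit Arguments. Unset Strict Implicit. Unset Printing Implicit Defensive.
Import Order.TTheory GRing.Theory Num.Theory.
Local Open Scope ring_scope.

Section RR.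
Variables (R : realType) (K : nat) (p q : R).

Notation vec := {ffun 'I_K -> R}.

Definition simplex (t : vec) : Prop := (forall i, 0 <= t i) /\ \sum_i t i = 1.

Definition sqdist (a b : vec) : R := \sum_i (a i - b i) ^+ 2.
Definition dist2 (a b : vec) : R := Num.sqrt (sqdist a b).

Definition Inv (phi : vec) : vec := [ffun i => (phi i - q) / (p - q)].

Definition InvN (phi : vec) : vec :=
  [ffun i => Num.max 0 (Inv phi i) / \sum_j Num.max 0 (Inv phi j)].

Definition is_simplex_proj (v t : vec) : Prop :=
  simplex t /\ forall t', simplex t' -> sqdist t v <= sqdist t' v.
Definition InvP (phi : vec) : vec := xget (Inv phi) (is_simplex_proj (Inv phi)).

Definition mcount (phi : vec) (tau : R) : nat := #|[set i | phi i < tau]|.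
Definition ctau (phi : vec) (tau : R) : R :=
  (1 - (mcount phi tau)%:R * q) / \sum_(i | tau <= phi i) phi i.
Definition tau_ok (phi : vec) (tau : R) : bool :=
  [forall i, (tau <= phi i) ==> (q <= ctau phi tau * phi i)].
Definition tau_star (phi : vec) : R :=
  let s := [seq phi j | j <- enum 'I_K & tau_ok phi (phi j)] in
  foldr Num.min (head 0 s) s.
Definition MLEstar (phi : vec) : vec :=
  [ffun i => if phi i < tau_star phi then 0
             else (ctau phi (tau_star phi) * phi i - q) / (p - q)].

Definition rr (x y : 'I_K) : R := if x == y then p else q.

(* Outcomes of the first N rounds: w u = (X_u, Y_u). *)
Notation outc N := {ffun 'I_N -> 'I_K * 'I_K}.

Definition weight (theta : vec) N (w : outc N) : R :=
  \prod_(u < N) (theta (w u).1 * rr (w u).1 (w u).2).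

Definition hist N (w : outc N) : vec :=
  [ffun y => (#|[set u | (w u).2 == y]|)%:R / N%:R].

Definition Pr (theta : vec) N (A : pred (outc N)) : R :=
  \sum_(w | A w) weight theta w.
Definition Exp (theta : vec) N (f : outc N -> R) : R :=
  \sum_w weight theta w * f w.

Definition consistent (est : vec -> vec) : Prop :=
  forall theta : vec, simplex theta ->
  forall eps delta : R, 0 < eps -> 0 < delta ->
  exists N0 : nat, forall N : nat, (N0 <= N)%N ->
    Pr theta (fun w : outc N => eps < dist2 (est (hist w)) theta) <= delta.

Definition mse_bound (est : vec -> vec) : Prop :=
  exists C : R, forall theta : vec, simplex theta -> forall N : nat, (1 <= N)%N ->
    Exp theta (fun w : outc N => sqdist (est (hist w)) theta) <= C * K%:R / N%:R.

End RR.

(* Each coordinate of Inv(phi^(N)) - theta is an average of N i.i.d. centred indicators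
   divided by p - q, so independence gives E ||Inv - theta||^2 <= K / ((p - q)^2 N), and
   Markov's inequality applied to the squared error yields consistency of Inv.  Euclidean
   projection onto the simplex, which is max(0, v - lambda) for an explicit threshold lambda,
   does not increase the distance to points of the simplex (obtuse-angle criterion), so both
   bounds pass to InvP.  InvN and MLE* are locally Lipschitz functions of Inv at every theta
   of the simplex, hence consistent as well: for MLE*, once the error is small compared to the
   smallest positive theta_i, the threshold tau* lies below phi_i on the support of theta and
   the normaliser c_tau* is close to 1. *)

From mathcomp Require Import all_boot all_order all_algebra.
From mathcomp Require Import boolp classical_sets reals.
From mathcomp Require Import ring lra.
Import Order.TTheory GRing.Theory Num.Theory.
Local Open Scope ring_scope.
Set Implicit Arguments. Unset Strict Implicit. Unset Printing Implicit Defensive.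

Lemma dist_max0 (R : realType) (x y : R) : 0 <= y -> `|Num.max 0 x - y| <= `|x - y|.
Proof.
move=> y_ge0; case: (leP 0 x) => x0 //.
by rewrite sub0r normrN ger0_norm // ler0_norm; lra.
Qed.

Lemma exists_small_pos (R : realType) (d0 c eps : R) : 0 < d0 -> 0 <= c -> 0 < eps ->
  exists d, [/\ 0 < d, d <= d0 & c * d <= eps].
Proof.
move=> d0_gt0 c_ge0 eps_gt0; have c1_gt0 : 0 < c + 1 by lra.
exists (Num.min d0 (eps / (c + 1))); split; first by rewrite lt_min d0_gt0 divr_gt0.
  by rewrite ge_min lexx.
apply: (@le_trans _ _ (c * (eps / (c + 1)))); first by rewrite ler_wpM2l // ge_min lexx orbT.
by rewrite mulrA ler_pdivrMr //; nra.
Qed.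

Section SimplexGeometry.
Variables (R : realType) (K : nat).
Notation vec := {ffun 'I_K -> R}.

Lemma sqdistC (a b : vec) : sqdist a b = sqdist b a.
Proof. by apply: eq_bigr => i _; rewrite -sqrrN opprB. Qed.

Lemma sqdist_ge0 (a b : vec) : 0 <= sqdist a b.
Proof. by rewrite sumr_ge0 // => i _; rewrite sqr_ge0. Qed.

Lemma sqdist_eq0 (a b : vec) : sqdist a b = 0 -> a = b.
Proof.
move=> ab0; apply/ffunP => i; apply/eqP; rewrite -subr_eq0 -sqrf_eq0; apply/eqP.
exact: (psumr_eq0P (fun i _ => sqr_ge0 _) ab0).
Qed.

Lemma sqdist_split (a t v : vec) :
  sqdist a v = sqdist a t + sqdist t v + 2 * \sum_i (a i - t i) * (t i - v i).
Proof. by rewrite /sqdist mulr_sumr -!big_split /=; apply: eq_bigr => i _; ring. Qed.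

Lemma sqdist_le_coord (a b : vec) d i : 0 <= d -> sqdist a b <= d ^+ 2 ->
  `|a i - b i| <= d.
Proof.
move=> d_ge0 ab_le; rewrite -ler_sqr ?nnegrE // real_normK ?num_real //.
by apply: le_trans ab_le; rewrite /sqdist (bigD1 i) //= lerDl sumr_ge0 // => j _; rewrite sqr_ge0.
Qed.

Lemma sqdist_le_of_coord (a b : vec) e : (forall i, `|a i - b i| <= e) ->
  sqdist a b <= (K%:R * e) ^+ 2.
Proof.
move=> ab_le; apply: (@le_trans _ _ (K%:R * e ^+ 2)).
  rewrite mulr_natl -[X in _ *+ X](card_ord K) -sumr_const; apply: ler_sum => i _.
  by rewrite -real_normK ?num_real // ler_sqr ?nnegrE // (le_trans _ (ab_le i)).
have K_le_KK : (K <= K * K)%N by case: K => // k; rewrite leq_pmulr.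
by rewrite exprMn ler_wpM2r ?sqr_ge0 // expr2 -natrM ler_nat.
Qed.

Lemma dist2_le (a b : vec) e : 0 <= e -> (dist2 a b <= e) = (sqdist a b <= e ^+ 2).
Proof. by move=> e_ge0; rewrite /dist2 -{1}(ger0_norm e_ge0) -sqrtr_sqr ler_sqrt ?sqr_ge0. Qed.

Lemma simplex_support (theta : vec) : simplex theta -> exists i, 0 < theta i.
Proof.
case=> theta_ge0 theta_sum1; apply/existsP; apply: contraT; rewrite negb_exists => /forallP h.
suff : \sum_i theta i = 0 by rewrite theta_sum1 => /eqP; rewrite oner_eq0.
by apply: big1 => i _; apply/eqP; rewrite eq_le theta_ge0 andbT leNgt h.
Qed.

Lemma simplex_le1 (theta : vec) i : simplex theta -> theta i <= 1.
Proof. by case=> theta_ge0 <-; rewrite (bigD1 i) //= lerDl sumr_ge0. Qed.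

Definition proj_obtuse (v t : vec) : Prop :=
  simplex t /\ forall t', simplex t' -> 0 <= \sum_i (t' i - t i) * (t i - v i).

Lemma proj_obtuse_minimal v t : proj_obtuse v t -> is_simplex_proj v t.
Proof.
case=> st obt; split=> // t' st'; rewrite (sqdist_split t' t v).
by have := obt t' st'; have := sqdist_ge0 t' t; lra.
Qed.

Lemma proj_obtuse_unique v t t' : proj_obtuse v t -> is_simplex_proj v t' -> t' = t.
Proof.
case=> st obt [st' min']; apply: sqdist_eq0.
have := min' t st; rewrite (sqdist_split t' t v).
by have := obt t' st'; have := sqdist_ge0 t' t; lra.
Qed.

Lemma proj_obtuse_contract v t theta : proj_obtuse v t -> simplex theta ->
  sqdist t theta <= sqdist v theta.
Proof.
case=> _ obt stheta; rewrite sqdistC (sqdistC v) (sqdist_split theta t v).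
by have := obt theta stheta; have := sqdist_ge0 t v; lra.
Qed.

Definition shift (v : vec) (lam : R) : vec := [ffun i => Num.max 0 (v i - lam)].

Lemma shift_obtuse v lam : \sum_i shift v lam i = 1 -> proj_obtuse v (shift v lam).
Proof.
move=> sum1; split=> [|t' [t'_ge0 t'_sum1]].
  by split=> // i; rewrite ffunE le_max lexx.
have split_term i : (t' i - shift v lam i) * (shift v lam i - v i) =
    lam * (shift v lam i - t' i) + t' i * Num.max 0 (lam - v i).
  rewrite ffunE; case: (leP (v i) lam) => h.
  - by rewrite (@max_l _ _ 0) ?subr_le0 // max_r ?subr_ge0 //; ring.
  - by rewrite max_r ?subr_ge0 ?ltW // (@max_l _ _ 0) ?subr_le0 ?ltW //; ring.
rewrite (eq_bigr _ (fun i _ => split_term i)) big_split /= -mulr_sumr sumrB sum1 t'_sum1.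
by rewrite subrr mulr0 add0r sumr_ge0 // => i _; rewrite mulr_ge0 // le_max lexx.
Qed.

(* The shift making the coordinates of v on S sum to 1; the projection uses the largest
   level over nonempty S. *)
Definition shift_level (v : vec) (S : {set 'I_K}) : R := (\sum_(i in S) v i - 1) / #|S|%:R.

Lemma sum_shift_max_level v (S0 : {set 'I_K}) : (0 < #|S0|)%N ->
  (forall S : {set 'I_K}, (0 < #|S|)%N -> shift_level v S <= shift_level v S0) ->
  \sum_i shift v (shift_level v S0) i = 1.
Proof.
move=> S0_gt0 S0_max; set lam := shift_level v S0.
have card_gt0 : 0 < #|S0|%:R :> R by rewrite ltr0n.
apply/eqP; rewrite eq_le; apply/andP; split; last first.
  rewrite (bigID (mem S0)) /= -[1]addr0 lerD ?sumr_ge0 // => [|i _]; last first.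
    by rewrite ffunE le_max lexx.
  apply: le_trans (ler_sum _ (fun i _ => _ : v i - lam <= shift v lam i)) => [|i]; last first.
    by rewrite ffunE le_max lexx orbT.
  rewrite sumrB sumr_const -mulr_natr /lam /shift_level mulfVK ?gt_eqF //.
  by rewrite opprB addrC subrK.
set S1 := [set i | lam < v i].
have -> : \sum_i shift v lam i = \sum_(i in S1) (v i - lam).
  rewrite (bigID (mem S1)) /= [X in _ + X]big1 ?addr0 => [|i]; last first.
    by rewrite inE ffunE -leNgt => h; rewrite max_l // subr_le0.
  by apply: eq_bigr => i; rewrite inE ffunE => h; rewrite max_r // subr_ge0 ltW.
have [S1_0|S1_gt0] := posnP #|S1|.
  by rewrite big_pred0 ?ler01 // => i; apply/negP => i_S1; rewrite (card0_eq S1_0) in i_S1.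
have := S0_max S1 S1_gt0; rewrite /shift_level -/lam ler_pdivrMr ?ltr0n // => h.
by rewrite sumrB sumr_const -mulr_natr lerBlDl addrC -lerBlDl.
Qed.

Lemma exists_proj_obtuse v : (0 < K)%N -> exists t, proj_obtuse v t.
Proof.
move=> K_gt0; have setT_gt0 : (0 < #|[set: 'I_K]|)%N by rewrite cardsT card_ord.
have [S0 S0_gt0 S0_max] :=
  arg_maxP (P := fun S : {set 'I_K} => (0 < #|S|)%N) (shift_level v) setT_gt0.
by exists (shift v (shift_level v S0)); apply/shift_obtuse/sum_shift_max_level.
Qed.

Lemma InvP_contract p q (phi theta : vec) : (0 < K)%N -> simplex theta ->
  sqdist (InvP p q phi) theta <= sqdist (Inv p q phi) theta.
Proof.
move=> K_gt0 stheta; have [t obt] := exists_proj_obtuse (Inv p q phi) K_gt0.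
rewrite /InvP; have := xgetPex (Inv p q phi) (ex_intro _ t (proj_obtuse_minimal obt)).
by move=> /(proj_obtuse_unique obt) ->; exact: proj_obtuse_contract.
Qed.

End SimplexGeometry.

Section RandomizedResponse.
Variables (R : realType) (K : nat) (p q : R).
Hypotheses (q_gt0 : 0 < q) (q_lt_p : q < p) (rr_norm : p + (K - 1)%:R * q = 1).
Notation vec := {ffun 'I_K -> R}.
Notation outcome N := {ffun 'I_N -> 'I_K * 'I_K}.
(* lra and nra do not use section hypotheses, so these are passed explicitly. *)
Local Ltac pq_lra := move: q_gt0 q_lt_p; lra.
Local Ltac pq_nra := move: q_gt0 q_lt_p; nra.

Lemma rr_ge0 (x y : 'I_K) : 0 <= rr p q x y.
Proof. rewrite /rr; case: eqP => _; pq_lra. Qed.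

Lemma rr_row_sum (x : 'I_K) : \sum_y rr p q x y = 1.
Proof.
rewrite (bigD1 x) //= /rr eqxx (eq_bigr (fun _ => q)).
  by rewrite sumr_const cardC1 card_ord -rr_norm subn1 mulr_natl.
by move=> y; rewrite eq_sym => /negbTE ->.
Qed.

Lemma p_le1 : p <= 1.
Proof. by rewrite -rr_norm lerDl mulr_ge0 ?ler0n ?ltW. Qed.

Definition law (theta : vec) (z : 'I_K * 'I_K) : R := theta z.1 * rr p q z.1 z.2.
Definition mean (theta : vec) (g : 'I_K * 'I_K -> R) : R := \sum_z law theta z * g z.

Lemma law_ge0 theta z : simplex theta -> 0 <= law theta z.
Proof. by case=> theta_ge0 _; rewrite mulr_ge0 ?rr_ge0. Qed.

Lemma mean_pair theta (g : 'I_K -> 'I_K -> R) :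
  mean theta (fun z => g z.1 z.2) = \sum_x theta x * \sum_y rr p q x y * g x y.
Proof.
rewrite /mean -(pair_bigA _ (fun x y => law theta (x, y) * g x y)) /=.
by apply: eq_bigr => x _; rewrite mulr_sumr; apply: eq_bigr => y _; rewrite mulrA.
Qed.

Lemma law_sum1 theta : simplex theta -> \sum_z law theta z = 1.
Proof.
case=> _ theta_sum1; rewrite -(pair_bigA _ (fun x y => law theta (x, y))) -[RHS]theta_sum1.
by apply: eq_bigr => x _; rewrite /law /= -mulr_sumr rr_row_sum mulr1.
Qed.

Lemma mean1 theta : simplex theta -> mean theta (fun=> 1) = 1.
Proof. by move=> hs; rewrite /mean; under eq_bigr do rewrite mulr1; exact: law_sum1. Qed.

Lemma le_mean theta g h : simplex theta -> (forall z, g z <= h z) ->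
  mean theta g <= mean theta h.
Proof. by move=> hs gh; apply: ler_sum => z _; rewrite ler_wpM2l ?law_ge0. Qed.

Definition out_prob (theta : vec) i : R := q + theta i * (p - q).

Definition indicator i (z : 'I_K * 'I_K) : R := if z.2 == i then 1 else 0.

Lemma mean_indicator theta i : simplex theta ->
  mean theta (indicator i) = out_prob theta i.
Proof.
case=> _ theta_sum1; rewrite (mean_pair theta (fun x y => indicator i (x, y))).
transitivity (\sum_x theta x * rr p q x i).
  apply: eq_bigr => x _; rewrite (bigD1 i) //= /indicator eqxx mulr1 big1 ?addr0 //.
  by move=> y /negbTE ->; rewrite mulr0.
have rrE x : rr p q x i = q + (if x == i then p - q else 0) by rewrite /rr; case: eqP; pq_lra.
under eq_bigr do rewrite rrE mulrDr.
rewrite big_split /= -mulr_suml theta_sum1 mul1r (bigD1 i) //= eqxx big1 ?addr0 //.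
by move=> x /negbTE ->; rewrite mulr0.
Qed.

Lemma out_prob_ge0 theta i : simplex theta -> 0 <= out_prob theta i.
Proof. by case=> theta_ge0 _; have := theta_ge0 i; rewrite /out_prob; pq_nra. Qed.

Lemma out_prob_le1 theta i : simplex theta -> out_prob theta i <= 1.
Proof.
move=> hs; have := simplex_le1 i hs; have := hs.1 i; have := p_le1.
rewrite /out_prob; pq_nra.
Qed.

Definition centered theta i z : R := indicator i z - out_prob theta i.

Lemma mean_centered theta i : simplex theta -> mean theta (centered theta i) = 0.
Proof.
move=> hs; rewrite /mean; under eq_bigr do rewrite /centered mulrBr.
rewrite sumrB -mulr_suml law_sum1 // mul1r -/(mean theta (indicator i)).
by rewrite mean_indicator // subrr.
Qed.

Lemma mean_centered_sqr_le1 theta i : simplex theta ->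
  mean theta (fun z => centered theta i z ^+ 2) <= 1.
Proof.
move=> hs; rewrite -(mean1 hs); apply: le_mean => // z.
have := out_prob_ge0 i hs; have := out_prob_le1 i hs.
by rewrite /centered /indicator; case: (z.2 == i); nra.
Qed.

Lemma weight_ge0 theta N (w : outcome N) : simplex theta -> 0 <= weight p q theta w.
Proof. by move=> hs; rewrite prodr_ge0 // => u _; apply: (law_ge0 (w u) hs). Qed.

Lemma Exp_prod theta N (F : 'I_N -> 'I_K * 'I_K -> R) :
  Exp p q theta (fun w => \prod_u F u (w u)) = \prod_u mean theta (F u).
Proof. by rewrite bigA_distr_bigA; apply: eq_bigr => w _; rewrite -big_split. Qed.

Lemma Exp_sum theta N (I : finType) (f : I -> outcome N -> R) :
  Exp p q theta (fun w => \sum_i f i w) = \sum_i Exp p q theta (f i).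
Proof. by rewrite exchange_big; apply: eq_bigr => w _; rewrite mulr_sumr. Qed.

Lemma Exp_mull theta N c (f : outcome N -> R) :
  Exp p q theta (fun w => c * f w) = c * Exp p q theta f.
Proof. by rewrite /Exp mulr_sumr; apply: eq_bigr => w _; rewrite mulrCA. Qed.

Lemma le_Exp theta N (f g : outcome N -> R) : simplex theta ->
  (forall w, f w <= g w) -> Exp p q theta f <= Exp p q theta g.
Proof. by move=> hs fg; apply: ler_sum => w _; rewrite ler_wpM2l ?weight_ge0. Qed.

Lemma Exp_coord theta N (u : 'I_N) g : simplex theta ->
  Exp p q theta (fun w => g (w u)) = mean theta g.
Proof.
move=> hs; pose F (u' : 'I_N) := if u' == u then g else fun=> 1.
have prodF (a : 'I_N -> R) : (forall u', u' != u -> a u' = 1) -> \prod_u' a u' = a u.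
  by move=> a1; rewrite (bigD1 u) //= big1 ?mulr1.
transitivity (Exp p q theta (fun w => \prod_u' F u' (w u'))).
  by apply: eq_bigr => w _; rewrite prodF /F ?eqxx // => u' /negbTE ->.
by rewrite Exp_prod prodF /F ?eqxx // => u' /negbTE ->; rewrite mean1.
Qed.

Lemma Exp_coord_mul theta N (u v : 'I_N) g h : simplex theta -> u != v ->
  Exp p q theta (fun w => g (w u) * h (w v)) = mean theta g * mean theta h.
Proof.
move=> hs uv; have vu : (v == u) = false by rewrite eq_sym (negbTE uv).
pose F (u' : 'I_N) := if u' == u then g else if u' == v then h else fun=> 1.
have prodF (a : 'I_N -> R) : (forall u', u' != u -> u' != v -> a u' = 1) ->
    \prod_u' a u' = a u * a v.
  move=> a1; rewrite (bigD1 u) // (bigD1 v) 1?eq_sym //= mulrA big1 ?mulr1 //.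
  by move=> u' /andP[]; apply: a1.
transitivity (Exp p q theta (fun w => \prod_u' F u' (w u'))).
  apply: eq_bigr => w _; rewrite prodF /F ?vu ?eqxx //.
  by move=> u' /negbTE -> /negbTE ->.
rewrite Exp_prod prodF /F ?vu ?eqxx // => u' /negbTE -> /negbTE ->; exact: mean1.
Qed.

Lemma Exp_sum_sqr theta N f : simplex theta -> mean theta f = 0 ->
  Exp p q theta (fun w : outcome N => (\sum_u f (w u)) ^+ 2) =
  N%:R * mean theta (fun z => f z ^+ 2).
Proof.
move=> hs f0.
have -> : (fun w : outcome N => (\sum_u f (w u)) ^+ 2) =
    (fun w => \sum_u \sum_v f (w u) * f (w v)).
  by apply: funext => w; rewrite expr2 mulr_suml; apply: eq_bigr => u _; rewrite mulr_sumr.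
rewrite Exp_sum mulr_natl -[X in _ *+ X](card_ord N) -sumr_const; apply: eq_bigr => u _.
rewrite Exp_sum (bigD1 u) //= (Exp_coord u (fun z => f z ^+ 2)) // big1 ?addr0 // => v vu.
by rewrite Exp_coord_mul 1?eq_sym // f0 mul0r.
Qed.

Lemma hist_sub_out_prob theta N (w : outcome N) i : (0 < N)%N ->
  hist R w i - out_prob theta i = (\sum_u centered theta i (w u)) / N%:R.
Proof.
move=> N_gt0; have N_neq0 : N%:R != 0 :> R by rewrite pnatr_eq0 -lt0n.
rewrite ffunE /centered sumrB sumr_const card_ord -big_mkcond sumr_const cardsE.
by rewrite -mulr_natr; field.
Qed.

Lemma hist_simplex N (w : outcome N) : (0 < N)%N -> simplex (hist R w).
Proof.
move=> N_gt0; split=> [i|]; first by rewrite ffunE divr_ge0 ?ler0n.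
have count_N : (\sum_i #|[set u | (w u).2 == i]|)%N = N.
  rewrite -[RHS]card_ord -[RHS]sum1_card (partition_big (fun u => (w u).2) predT) //=.
  by apply: eq_bigr => i _; rewrite -sum1_card; apply: eq_bigl => u; rewrite inE.
under eq_bigr do rewrite ffunE.
by rewrite -mulr_suml -natr_sum count_N divff // pnatr_eq0 -lt0n.
Qed.

Lemma Inv_sub (theta phi : vec) i :
  Inv p q phi i - theta i = (phi i - out_prob theta i) / (p - q).
Proof. by rewrite ffunE /out_prob; field; rewrite subr_eq0 gt_eqF. Qed.

Lemma Exp_sqdist_Inv theta N : simplex theta -> (0 < N)%N ->
  Exp p q theta (fun w : outcome N => sqdist (Inv p q (hist R w)) theta) <=
  ((p - q) ^+ 2)^-1 * K%:R / N%:R.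
Proof.
move=> hs N_gt0; have N_gt0' : 0 < N%:R :> R by rewrite ltr0n.
have pq_gt0 : 0 < p - q by rewrite subr_gt0.
pose c := (N%:R * (p - q)) ^- 2.
have -> : (fun w : outcome N => sqdist (Inv p q (hist R w)) theta) =
    (fun w => \sum_i c * (\sum_u centered theta i (w u)) ^+ 2).
  apply: funext => w; apply: eq_bigr => i _.
  by rewrite Inv_sub hist_sub_out_prob // /c; field; rewrite ?gt_eqF.
rewrite Exp_sum (@le_trans _ _ (\sum_(i < K) ((p - q) ^+ 2)^-1 / N%:R)) //; last first.
  by rewrite sumr_const card_ord -[_ *+ K]mulr_natr mulrAC.
apply: ler_sum => i _; rewrite Exp_mull Exp_sum_sqr ?mean_centered //.
have -> : c * (N%:R * mean theta (fun z => centered theta i z ^+ 2)) =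
    ((p - q) ^+ 2)^-1 / N%:R * mean theta (fun z => centered theta i z ^+ 2).
  by rewrite /c; field; rewrite ?gt_eqF.
by rewrite ler_piMr ?mean_centered_sqr_le1 // mulr_ge0 ?invr_ge0 ?sqr_ge0 ?ltW.
Qed.

Lemma subset_Pr theta N (A B : pred (outcome N)) : simplex theta ->
  (forall w, A w -> B w) -> Pr p q theta A <= Pr p q theta B.
Proof.
move=> hs AB; rewrite [X in X <= _]big_mkcond [X in _ <= X]big_mkcond /=.
apply: ler_sum => w _; case Aw: (A w); first by rewrite AB.
by case: (B w); rewrite ?weight_ge0.
Qed.

Lemma markov theta N (f : outcome N -> R) a : simplex theta -> 0 < a ->
  (forall w, 0 <= f w) -> Pr p q theta (fun w => a < f w) <= Exp p q theta f / a.
Proof.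
move=> hs a_gt0 f_ge0; rewrite ler_pdivlMr // mulr_suml.
rewrite [X in _ <= X](bigID (fun w => a < f w)) /=.
rewrite -[X in X <= _]addr0 lerD ?sumr_ge0 // => [|w _]; last by rewrite mulr_ge0 ?weight_ge0.
by apply: ler_sum => w afw; rewrite ler_wpM2l ?weight_ge0 // ltW.
Qed.

End RandomizedResponse.

Section Consistency.
Variables (R : realType) (K : nat) (p q : R).
Hypotheses (K_ge2 : (2 <= K)%N) (q_gt0 : 0 < q) (q_lt_p : q < p)
  (rr_norm : p + (K - 1)%:R * q = 1).
Notation vec := {ffun 'I_K -> R}.
Notation outcome N := {ffun 'I_N -> 'I_K * 'I_K}.

Let K_gt0 : (0 < K)%N. Proof. exact: ltnW. Qed.
Let pq_gt0 : 0 < p - q. Proof. by rewrite subr_gt0. Qed.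
Let p_gt0 : 0 < p. Proof. exact: lt_trans q_lt_p. Qed.

Definition Inv_continuous_at (est : vec -> vec) (theta : vec) : Prop :=
  forall eps, 0 < eps -> exists2 d, 0 < d & forall phi, simplex phi ->
    sqdist (Inv p q phi) theta <= d ^+ 2 -> sqdist (est phi) theta <= eps ^+ 2.

(* Chebyshev's inequality for Inv, transported to est. *)
Lemma consistent_of_Inv_continuous est :
  (forall theta, simplex theta -> Inv_continuous_at est theta) -> consistent p q est.
Proof.
move=> est_cont theta stheta eps delta eps_gt0 delta_gt0.
have [d d_gt0 est_close] := est_cont theta stheta eps eps_gt0.
pose C := (delta * d ^+ 2)^-1 * (K%:R / (p - q) ^+ 2).
exists (Num.truncn C).+1 => N N_large.
have N_gt0 : (0 < N)%N by apply: leq_trans N_large.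
have C_lt_N : C < N%:R by apply: lt_le_trans (truncnS_gt C) _; rewrite ler_nat.
have d2_gt0 : 0 < d ^+ 2 by rewrite exprn_gt0.
pose Inv_err (w : outcome N) := sqdist (Inv p q (hist R w)) theta.
apply: (@le_trans _ _ (Pr p q theta (fun w => d ^+ 2 < Inv_err w))).
  apply: subset_Pr => // w; apply: contraLR; rewrite -!leNgt => Inv_close.
  by rewrite dist2_le ?(ltW eps_gt0) // est_close //; apply: hist_simplex.
apply: le_trans (markov q_gt0 q_lt_p stheta d2_gt0 (fun w => sqdist_ge0 _ _ : 0 <= Inv_err w)) _.
rewrite ler_pdivrMr // (le_trans (Exp_sqdist_Inv q_gt0 q_lt_p rr_norm stheta N_gt0)) //.
by rewrite ler_pdivrMr ?ltr0n // mulrC -ler_pdivrMl ?mulr_gt0 // ltW.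
Qed.

Lemma Inv_continuous_at_of_linear (est : vec -> vec) (theta : vec) (d0 C : R) :
  0 < d0 -> 0 <= C ->
  (forall phi d, simplex phi -> d <= d0 -> (forall i, `|Inv p q phi i - theta i| <= d) ->
     forall i, `|est phi i - theta i| <= C * d) ->
  Inv_continuous_at est theta.
Proof.
move=> d0_gt0 C_ge0 est_lin eps eps_gt0.
have [d [d_gt0 d_le eps_ge]] := exists_small_pos d0_gt0 (mulr_ge0 (ler0n _ K) C_ge0) eps_gt0.
exists d => // phi sphi Inv_close.
apply: le_trans (sqdist_le_of_coord (est_lin phi d sphi d_le _)) _.
  by move=> i; apply: sqdist_le_coord => //; apply: ltW.
by rewrite ler_sqr ?nnegrE ?mulrA ?mulr_ge0 ?ler0n ?(ltW d_gt0) ?(ltW eps_gt0).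
Qed.

Lemma InvN_near (theta phi : vec) d : simplex theta -> d <= (2 * K%:R)^-1 ->
  (forall i, `|Inv p q phi i - theta i| <= d) ->
  forall i, `|InvN p q phi i - theta i| <= 2 * (K%:R + 1) * d.
Proof.
move=> [theta_ge0 theta_sum1] d_small Inv_close i.
have Kd_le : K%:R * d <= 2^-1.
  by move: d_small; rewrite invfM ler_pdivlMr ?ltr0n // mulrC.
set v := Inv p q phi; set s := \sum_j Num.max 0 (v j).
have max_close j : `|Num.max 0 (v j) - theta j| <= d.
  exact: le_trans (dist_max0 _ (theta_ge0 j)) (Inv_close j).
have d_ge0 : 0 <= d := le_trans (normr_ge0 _) (max_close i).
have s_close : `|s - 1| <= K%:R * d.
  rewrite -[X in s - X]theta_sum1 -sumrB; apply: le_trans (ler_norm_sum _ _ _) _.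
  by apply: le_trans (ler_sum _ (fun j _ => max_close j)) _; rewrite sumr_const card_ord mulr_natl.
have s_ge : 2^-1 <= s by move: s_close; rewrite ler_norml; lra.
have -> : InvN p q phi i - theta i =
    ((Num.max 0 (v i) - theta i) - theta i * (s - 1)) / s.
  by rewrite ffunE -/v -/s; field; rewrite gt_eqF //; lra.
have s_gt0 : 0 < s by lra.
rewrite normf_div (gtr0_norm s_gt0) ler_pdivrMr //.
apply: le_trans (ler_normB _ _) _; rewrite normrM (ger0_norm (theta_ge0 i)).
have theta_le1 := simplex_le1 i (conj theta_ge0 theta_sum1).
have err_le : theta i * `|s - 1| <= K%:R * d.
  by apply: le_trans s_close; rewrite ler_piMl.
have Kd_ge0 : 0 <= (K%:R + 1) * d by rewrite mulr_ge0 // addr_ge0.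
have := max_close i; nra.
Qed.

Lemma InvN_Inv_continuous theta : simplex theta -> Inv_continuous_at (InvN p q) theta.
Proof.
move=> stheta; apply: (@Inv_continuous_at_of_linear _ _ (2 * K%:R)^-1 (2 * (K%:R + 1))).
- by rewrite invr_gt0 mulr_gt0 ?ltr0n.
- by rewrite mulr_ge0 ?addr_ge0.
- by move=> phi d _; exact: InvN_near.
Qed.

Lemma tau_star_le (phi : vec) j : tau_ok q phi (phi j) -> tau_star q phi <= phi j.
Proof.
move=> ok; rewrite /tau_star foldrE big_map big_filter_cond.
by under eq_bigl do rewrite andbT; rewrite big_enum_cond; exact: bigmin_le_cond.
Qed.

Section MLEstarError.
Variables (theta phi : vec) (e : R).
Hypotheses (stheta : simplex theta) (sphi : simplex phi)
  (phi_close : forall i, `|phi i - out_prob p q theta i| <= e)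
  (Ke_small : K%:R * e <= p / 2).

Let e_ge0 : 0 <= e.
Proof. by case: (simplex_support stheta) => i _; apply: le_trans (phi_close i). Qed.

Lemma theta_eq0_below tau i : (forall j, 0 < theta j -> tau <= phi j) ->
  phi i < tau -> theta i = 0.
Proof.
move=> tau_le phi_lt; apply: le_anti; rewrite stheta.1 andbT leNgt.
by apply: contraL phi_lt => /tau_le; rewrite -leNgt.
Qed.

Lemma ctau_near1 tau : (forall i, 0 < theta i -> tau <= phi i) ->
  `|ctau q phi tau - 1| <= 2 * K%:R * e / p.
Proof.
move=> tau_le; have [j0 theta_j0] := simplex_support stheta.
set M := [set i | phi i < tau].
have M_theta0 i : i \in M -> theta i = 0 by rewrite inE; apply: theta_eq0_below.
have card_M : (#|M| <= K - 1)%N.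
  rewrite subn1 -[K in K.-1](card_ord K) -(cardC1 j0); apply: subset_leq_card.
  apply/fintype.subsetP => i iM.
  rewrite !inE; apply: contraTneq iM => ->; apply/negP => /M_theta0 theta0.
  by rewrite theta0 ltxx in theta_j0.
set E := \sum_(i in M) (phi i - q).
have E_le : `|E| <= K%:R * e.
  apply: le_trans (ler_norm_sum _ _ _) _; apply: (@le_trans _ _ (\sum_(i in M) e)).
    by apply: ler_sum => i iM; have := phi_close i; rewrite /out_prob M_theta0 // mul0r addr0.
  rewrite sumr_const -(mulr_natl e #|M|); apply: ler_wpM2r => //.
  by rewrite ler_nat -[X in (_ <= X)%N](card_ord K) max_card.
have M_q_le : p <= 1 - #|M|%:R * q.
  have : #|M|%:R <= (K - 1)%:R :> R by rewrite ler_nat.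
  by move: rr_norm q_gt0; nra.
rewrite /ctau /mcount -/M.
have -> : \sum_(i | tau <= phi i) phi i = 1 - #|M|%:R * q - E.
  rewrite (eq_bigl (fun i => i \notin M)) => [|i]; last by rewrite inE -leNgt.
  by move: sphi.2; rewrite (bigID (mem M)) /= /E sumrB sumr_const -mulr_natl; lra.
have den_ge : p / 2 <= 1 - #|M|%:R * q - E by move: E_le Ke_small; rewrite ler_norml; lra.
have den_gt0 : 0 < 1 - #|M|%:R * q - E by apply: lt_le_trans den_ge; rewrite divr_gt0.
rewrite (_ : _ / _ - 1 = E / (1 - #|M|%:R * q - E)); last by field; rewrite gt_eqF.
rewrite normf_div (gtr0_norm den_gt0) ler_pdivrMr // (le_trans E_le) //.
have -> : K%:R * e = 2 * K%:R * e / p * (p / 2) by field; rewrite gt_eqF.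
by rewrite ler_wpM2l // divr_ge0 ?mulr_ge0 ?ler0n // ltW.
Qed.

(* Once the error is small compared to the smallest positive theta_i, the minimum of phi over
   the support of theta is an admissible threshold, so tau_star lies below it. *)
Lemma tau_star_below_support g : (forall i, 0 < theta i -> g <= theta i * (p - q)) ->
  e + 2 * K%:R * e / p <= g -> forall i, 0 < theta i -> tau_star q phi <= phi i.
Proof.
move=> g_le err_le i theta_i.
have [j theta_j j_min] := arg_minP (P := fun j => 0 < theta j) phi theta_i.
suff ok : tau_ok q phi (phi j) by apply: le_trans (tau_star_le ok) (j_min i theta_i).
have := ctau_near1 j_min; rewrite ler_norml => /andP[c_ge _].
set A := 2 * K%:R * e / p in err_le c_ge; set c := ctau q phi (phi j) in c_ge *.
have A_ge0 : 0 <= A by rewrite divr_ge0 ?mulr_ge0 ?ler0n // ltW.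
have phi_j_ge : q + g - e <= phi j.
  by move: (phi_close j) (g_le j theta_j); rewrite ler_norml /out_prob => /andP[lo _]; lra.
have phi_j_le1 := simplex_le1 j sphi.
have g_le1 : g <= 1.
  apply: le_trans (g_le j theta_j) _; have := simplex_le1 j stheta; have := stheta.1 j.
  by move: (p_le1 q_gt0 rr_norm) q_gt0 q_lt_p; nra.
apply/forallP => k; apply/implyP => phi_k_ge; rewrite -/c.
have c_ge0 : 0 <= c by move: e_ge0; lra.
have := sphi.1 j; move: q_gt0; nra.
Qed.

Lemma MLEstar_near : (forall i, 0 < theta i -> tau_star q phi <= phi i) ->
  forall i, `|MLEstar p q phi i - theta i| <= (e + 2 * K%:R * e / p) / (p - q).
Proof.
move=> ts_le i; have := ctau_near1 ts_le; set c := ctau q phi _ => c_close.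
have A_ge0 : 0 <= 2 * K%:R * e / p by rewrite divr_ge0 ?mulr_ge0 ?ler0n // ltW.
rewrite ffunE -/c; case: ifP => [phi_lt|_].
  rewrite (theta_eq0_below ts_le phi_lt) subrr normr0.
  by apply: divr_ge0; [apply: addr_ge0 | apply: ltW].
rewrite (_ : _ - theta i = ((c - 1) * phi i + (phi i - out_prob p q theta i)) / (p - q)).
  2: by rewrite /out_prob; field; rewrite gt_eqF.
rewrite normf_div (gtr0_norm pq_gt0); apply: ler_wpM2r; first by rewrite invr_ge0 ltW.
apply: le_trans (ler_normD _ _) _; rewrite normrM (ger0_norm (sphi.1 i)).
have : `|c - 1| * phi i <= `|c - 1| by rewrite ler_piMr ?simplex_le1.
by have := phi_close i; lra.
Qed.

End MLEstarError.

Lemma MLEstar_Inv_continuous theta : simplex theta -> Inv_continuous_at (MLEstar p q) theta.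
Proof.
move=> stheta; have [i0 theta_i0] := simplex_support stheta.
have [m theta_m m_min] := arg_minP (P := fun j => 0 < theta j) theta theta_i0.
pose g := theta m * (p - q); pose C := 1 + 2 * K%:R / p.
have C_gt0 : 0 < C by rewrite addr_gt0 ?divr_gt0 ?mulr_gt0 ?ltr0n.
have d0_gt0 : 0 < Num.min (p / (2 * K%:R * (p - q))) (g / (C * (p - q))).
  by rewrite lt_min !divr_gt0 ?mulr_gt0 ?ltr0n.
apply: (Inv_continuous_at_of_linear d0_gt0 (ltW C_gt0)) => phi d sphi.
rewrite le_min ler_pdivlMr ?ler_pdivlMr ?mulr_gt0 ?ltr0n //.
move=> /andP[Ke_small err_small] Inv_close i.
have phi_close j : `|phi j - out_prob p q theta j| <= (p - q) * d.
  by have := Inv_close j; rewrite Inv_sub // normf_div (gtr0_norm pq_gt0) ler_pdivrMr // mulrC.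
have err_eq : (p - q) * d + 2 * K%:R * ((p - q) * d) / p = C * ((p - q) * d).
  by rewrite /C; field; rewrite gt_eqF.
have Ke_le : K%:R * ((p - q) * d) <= p / 2 by move: Ke_small; lra.
have err_le : (p - q) * d + 2 * K%:R * ((p - q) * d) / p <= g.
  by rewrite err_eq; move: err_small; lra.
have g_le j : 0 < theta j -> g <= theta j * (p - q).
  by move=> theta_j; rewrite ler_wpM2r ?m_min // ltW.
apply: le_trans (MLEstar_near stheta sphi phi_close Ke_le _ i) _.
  by have /(_ err_le) := tau_star_below_support stheta sphi phi_close Ke_le g_le.
by rewrite err_eq [(p - q) * d]mulrC mulrA mulfK ?gt_eqF.
Qed.

End Consistency.

Unset Implicit Arguments.
Set Strict Implicit.

Theorem theorem9 (R : realType) (K : nat) (p q : R) :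
  (2 <= K)%N -> 0 < q -> q < p -> p + (K - 1)%:R * q = 1 ->
  [/\ @consistent R K p q (@Inv R K p q), @consistent R K p q (@InvP R K p q),
      @consistent R K p q (@InvN R K p q) & @consistent R K p q (@MLEstar R K p q)] /\
  (@mse_bound R K p q (@Inv R K p q) /\ @mse_bound R K p q (@InvP R K p q)).
Proof.
move=> K_ge2 q_gt0 q_lt_p rr_norm; have K_gt0 : (0 < K)%N := ltnW K_ge2.
have Exp_Inv := Exp_sqdist_Inv q_gt0 q_lt_p rr_norm.
split; [split; apply: consistent_of_Inv_continuous => // theta stheta | split].
- by move=> eps eps_gt0; exists eps.
- move=> eps eps_gt0; exists eps => // phi _.
  exact/le_trans/InvP_contract.
- exact: InvN_Inv_continuous.
- exact: MLEstar_Inv_continuous.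
- by exists ((p - q) ^+ 2)^-1 => theta stheta N; apply: Exp_Inv.
- exists ((p - q) ^+ 2)^-1 => theta stheta N N_gt0.
  apply: le_trans (Exp_Inv _ _ stheta N_gt0); apply: le_Exp => // w.
  exact: InvP_contract.
Qed.
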